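(* Let $W$ be a discrete memoryless channel with finite input alphabet $\mathcal{X}$ and finite output alphabet $\mathcal{Y}$, and let $\vartheta(\rho)$ be defined as in the context. Let $\{\bm{x}_1,\ldots,\bm{x}_M\}\subseteq\mathcal{X}^n$ be any code of block-length $n$ with $M$ codewords, and let $\bm{\Psi}_m=\bm{\psi}_{x_{m,1}}\otimes\cdots\otimes\bm{\psi}_{x_{m,n}}$ be the state vector of codeword $\bm{x}_m=(x_{m,1},\ldots,x_{m,n})$. Then for every $\rho\geq 1$, $$\max_{m}\sum_{m'\neq m}\langle\bm{\Psi}_m,\bm{\Psi}_{m'}\rangle \;\geq\; \frac{\left(M e^{-n\vartheta(\rho)}-1\right)^{\rho}}{(M-1)^{\rho-1}}.$$
   Context: $W(y|x)$, $x\in\mathcal{X}$, $y\in\mathcal{Y}$, are the transition probabilities of the channel; the channel is memoryless, so $W^{(n)}(\bm{y}|\bm{x})=\prod_{i=1}^n W(y_i|x_i)$. For each input symbol $x$, the state vector $\bm{\psi}_x\in\mathbb{R}^{|\mathcal{Y}|}$ has components $\bm{\psi}_x(y)=\sqrt{W(y|x)}$ (nonnegative square roots), so it is a unit vector and $\langle\bm{\psi}_x,\bm{\psi}_{x'}\rangle=\sum_y\sqrt{W(y|x)W(y|x')}\ge 0$; $\otimes$ is the Kronecker product, and $\langle\bm{\Psi}_m,\bm{\Psi}_{m'}\rangle=\sum_{\bm{y}\in\mathcal{Y}^n}\sqrt{W^{(n)}(\bm{y}|\bm{x}_m)W^{(n)}(\bm{y}|\bm{x}_{m'})}$. For $\rho\ge1$,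 an orthonormal representation of degree $\rho$ is a family $\{\tilde{\bm{\psi}}_x\}_{x\in\mathcal{X}}$ of unit-norm vectors in some (complex) Hilbert space such that $|\langle\tilde{\bm{\psi}}_x,\tilde{\bm{\psi}}_{x'}\rangle|\le(\langle\bm{\psi}_x,\bm{\psi}_{x'}\rangle)^{1/\rho}$ for all $x,x'$; $\Gamma(\rho)$ denotes the set of all such representations. The value of a representation is $V(\{\tilde{\bm{\psi}}_x\})=\min_{\bm{f}}\max_x\log\frac{1}{|\langle\tilde{\bm{\psi}}_x,\bm{f}\rangle|^2}$, the minimum over unit-norm vectors $\bm{f}$ in the same space, and $\vartheta(\rho)=\min_{\{\tilde{\bm{\psi}}_x\}\in\Gamma(\rho)}V(\{\tilde{\bm{\psi}}_x\})$. Logarithms are natural. *)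

From HB Require Import structures.
From mathcomp Require Import all_boot all_order all_algebra.
From mathcomp Require Import all_classical all_reals all_analysis.
From mathcomp Require complex.
Import complex.ComplexField.
Set Implicit Arguments. Unset Strict Implicit. Unset Printing Implicit Defensive.
Import Order.TTheory GRing.Theory Num.Theory.
Local Open Scope ring_scope.
Local Open Scope classical_set_scope.

Definition is_channel (R : realType) (X Y : finType) (W : X -> Y -> R) : Prop :=
  (forall x y, 0 <= W x y) /\ (forall x, \sum_(y : Y) W x y = 1).

Definition ip_psi (R : realType) (X Y : finType) (W : X -> Y -> R) (x x' : X) : R :=
  \sum_(y : Y) Num.sqrt (W x y) * Num.sqrt (W x' y).

Definition ip_Psi (R : realType) (X Y : finType) (W : X -> Y -> R) (n : nat)
  (xm xm' : 'I_n -> X) : R :=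
  \sum_(y : {ffun 'I_n -> Y})
     Num.sqrt ((\prod_(i < n) W (xm i) (y i)) * (\prod_(i < n) W (xm' i) (y i))).

Notation C R := (complex.complex R).
Definition cabs (R : realType) (z : C R) : R :=
  Num.sqrt (complex.Re z ^+ 2 + complex.Im z ^+ 2).

Definition cinner (R : realType) (d : nat) (u v : 'I_d -> C R) : C R :=
  \sum_(i < d) u i * complex.conjc (v i).

Definition unit_vec (R : realType) (d : nat) (u : 'I_d -> C R) : Prop :=
  cinner u u = 1.

Definition orth_rep (R : realType) (X Y : finType) (W : X -> Y -> R) (rho : R)
  (d : nat) (t : X -> 'I_d -> C R) : Prop :=
  (forall x, unit_vec (t x)) /\
  (forall x x', cabs (cinner (t x) (t x')) <= (ip_psi W x x') `^ (rho^-1)).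

(** Set of values  max_x log (1/|<t_x,f>|^2)  over all representations t in
    Gamma(rho) (in any C^d) and unit vectors f with all <t_x,f> <> 0
    (other f give the value +oo, which does not affect the infimum). *)
Definition rep_values (R : realType) (X Y : finType) (W : X -> Y -> R) (rho : R)
  : set R :=
  [set v | exists (d : nat) (t : X -> 'I_d -> C R) (f : 'I_d -> C R),
     [/\ orth_rep W rho t, unit_vec f,
         (forall x, 0 < cabs (cinner (t x) f)) &
         v = \big[Num.max/0]_(x : X) ln ((cabs (cinner (t x) f) ^+ 2)^-1)]].

Definition vartheta (R : realType) (X Y : finType) (W : X -> Y -> R) (rho : R) : R :=
  inf (rep_values W rho).

(* Fix a representation t in Gamma(rho) and a unit vector f with
   |<t_x,f>|^2 >= e^{-v} for every input x.  The tensor vectors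
   T_m = t_{x_m1} (x) ... (x) t_{x_mn} and F = f (x) ... (x) f satisfy
   |<T_m,F>|^2 >= e^{-nv} and |<T_m,T_m'>| <= <Psi_m,Psi_m'>^{1/rho}.  A Bessel
   inequality for non-orthogonal families bounds sum_m |<T_m,F>|^2 by the largest
   row sum of the Gram matrix |<T_m,T_m'>|, and concavity of s |-> s^{1/rho}
   bounds that row sum by 1 + (M-1)^{1-1/rho} S^{1/rho}, where S is the left-hand
   side.  Hence M e^{-nv} <= 1 + (M-1)^{1-1/rho} S^{1/rho}; pass to the infimum
   over v and raise to the power rho. *)

From HB Require Import structures.
From mathcomp Require Import all_boot all_order all_algebra.
From mathcomp Require Import all_classical all_reals all_analysis.
From mathcomp Require Import complex ring lra.
Set Implicit Arguments. Unset Strict Implicit. Unset Printing Implicit Defensive.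
Import Order.TTheory GRing.Theory Num.Theory.
Local Open Scope ring_scope.
Local Open Scope complex_scope.

Section ComplexInnerProduct.
Variable R : realType.
Implicit Types (z w : C R) (a : R).

Lemma cabs_normc z : cabs z = Normc.normc z.
Proof. by case: z. Qed.

Lemma cabs_ge0 z : 0 <= cabs z.
Proof. exact: sqrtr_ge0. Qed.

Lemma cabs1 : cabs (1 : C R) = 1.
Proof. by rewrite cabs_normc Normc.normc1. Qed.

Lemma cabsM z w : cabs (z * w) = cabs z * cabs w.
Proof. by rewrite !cabs_normc Normc.normcM. Qed.

Lemma cabsJ z : cabs (conjc z) = cabs z.
Proof. by case: z => a b; rewrite /cabs /= sqrrN. Qed.

Lemma cabs_real a : cabs a%:C = `|a|.
Proof. by rewrite /cabs /= expr0n /= addr0 sqrtr_sqr. Qed.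

Lemma cabs0 : cabs (0 : C R) = 0.
Proof. by rewrite cabs_normc Normc.normc0. Qed.

Lemma cabsD z w : cabs (z + w) <= cabs z + cabs w.
Proof. rewrite !cabs_normc; exact: le_normcD. Qed.

Lemma ler_cabs_sum (I : finType) (F : I -> C R) :
  cabs (\sum_i F i) <= \sum_i cabs (F i).
Proof.
elim/big_rec2: _ => [|i y1 y2 _ h]; first by rewrite cabs0.
by apply: le_trans (cabsD _ _) _; rewrite lerD2l.
Qed.

Lemma cabs_prod (I : finType) (F : I -> C R) :
  cabs (\prod_i F i) = \prod_i cabs (F i).
Proof. by elim/big_rec2: _ => [|i y1 y2 _ <-]; rewrite ?cabs1 ?cabsM. Qed.

Lemma mulcJ z : z * conjc z = (cabs z ^+ 2)%:C.
Proof.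
case: z => a b; rewrite /cabs /= sqr_sqrtr ?addr_ge0 ?sqr_ge0 //.
by simpc; rewrite -!expr2 [b * a]mulrC addNr.
Qed.

(* [cinner] over an arbitrary finite index type, so that tensor products
   (indexed by functions) are again vectors. *)
Definition innerc (I : finType) (u v : I -> C R) : C R :=
  \sum_i u i * conjc (v i).

Definition normsq (I : finType) (u : I -> C R) : R := \sum_i cabs (u i) ^+ 2.

Variable I : finType.
Implicit Types (u v f : I -> C R).

Lemma normsq_ge0 u : 0 <= normsq u.
Proof. by apply: sumr_ge0 => i _; rewrite sqr_ge0. Qed.

Lemma innerc_self u : innerc u u = (normsq u)%:C.
Proof. by rewrite rmorph_sum; apply: eq_bigr => i _; rewrite mulcJ. Qed.

Lemma innerc_conj u v : innerc v u = conjc (innerc u v).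
Proof.
by rewrite rmorph_sum; apply: eq_bigr => i _; rewrite rmorphM /= conjcK mulrC.
Qed.

Lemma cabs_innerc_unit_le u f : normsq f = 1 ->
  cabs (innerc u f) ^+ 2 <= normsq u.
Proof.
move=> f1; set a := innerc u f.
have residual : (normsq (fun i => u i - a * f i))%:C = (normsq u - cabs a ^+ 2)%:C.
  rewrite -innerc_self rmorphB /= -mulcJ -innerc_self /innerc.
  under eq_bigr do rewrite rmorphB rmorphM /=.
  have uf : \sum_i u i * conjc (f i) = a by [].
  have fu : \sum_i f i * conjc (u i) = conjc a by rewrite -innerc_conj.
  have ff : \sum_i f i * conjc (f i) = 1 by rewrite -/(innerc f f) innerc_self f1.
  rewrite (eq_bigr (fun i => u i * conjc (u i) - conjc a * (u i * conjc (f i))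
     - a * (f i * conjc (u i)) + a * conjc a * (f i * conjc (f i)))) => [|i _];
    last by ring.
  by rewrite big_split /= !sumrB -!mulr_sumr uf fu ff; ring.
by have := normsq_ge0 (fun i => u i - a * f i); rewrite (complexI residual) subr_ge0.
Qed.
End ComplexInnerProduct.

Lemma sum_gram_le (R : realFieldType) (J : finType) (a : J -> R) (G : J -> J -> R) :
  (forall j k, 0 <= G j k) -> (forall j k, G j k = G k j) ->
  \sum_j \sum_k a j * a k * G j k <= \sum_j a j ^+ 2 * \sum_k G j k.
Proof.
move=> G0 Gsym.
have amgm j k : a j * a k * G j k <= (a j ^+ 2 * G j k + a k ^+ 2 * G j k) / 2.
  by have := G0 j k; have := sqr_ge0 (a j - a k); nra.
have swap : \sum_j \sum_k a k ^+ 2 * G j k = \sum_j \sum_k a j ^+ 2 * G j k.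
  by rewrite exchange_big; apply: eq_bigr => j _; apply: eq_bigr => k _; rewrite Gsym.
apply: le_trans (ler_sum _ (fun j _ => ler_sum _ (fun k _ => amgm j k))) _.
under eq_bigr do rewrite -mulr_suml big_split /=.
rewrite -mulr_suml big_split /= swap.
under [X in _ <= X]eq_bigr do rewrite mulr_sumr.
lra.
Qed.

Section GramBessel.
Variables (R : realType) (I J : finType).
Implicit Types (T : J -> I -> C R) (c : J -> C R) (g : I -> C R).

Lemma innerc_suml T c g :
  innerc (fun i => \sum_j c j * T j i) g = \sum_j c j * innerc (T j) g.
Proof.
rewrite /innerc; under eq_bigr do rewrite mulr_suml.
rewrite exchange_big /=; apply: eq_bigr => j _; rewrite mulr_sumr.
by apply: eq_bigr => i _; rewrite mulrA.
Qed.

Lemma innerc_sumr T c g :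
  innerc g (fun i => \sum_j c j * T j i) = \sum_j conjc (c j) * innerc g (T j).
Proof.
rewrite innerc_conj innerc_suml rmorph_sum.
by apply: eq_bigr => j _; rewrite rmorphM [innerc g _]innerc_conj.
Qed.

Lemma normsq_comb_le T c :
  normsq (fun i => \sum_j c j * T j i)
  <= \sum_j \sum_k cabs (c j) * cabs (c k) * cabs (innerc (T j) (T k)).
Proof.
set u := fun i => _.
have -> : normsq u = cabs (innerc u u).
  by rewrite innerc_self cabs_real ger0_norm ?normsq_ge0.
rewrite innerc_suml; apply: le_trans (ler_cabs_sum _) _; apply: ler_sum => j _.
rewrite cabsM innerc_sumr; under [X in _ <= X]eq_bigr do rewrite -mulrA.
rewrite -mulr_sumr ler_wpM2l ?cabs_ge0 //.
apply: le_trans (ler_cabs_sum _) _; apply: ler_sum => k _.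
by rewrite cabsM cabsJ.
Qed.

(* Cauchy-Schwarz against u = sum_j <T_j,F>^* T_j gives A^2 <= |u|^2 <= A B,
   where A is the left-hand side. *)
Lemma sum_cabs_innerc_le T (F : I -> C R) (B : R) :
  normsq F = 1 -> 0 <= B -> (forall j, \sum_k cabs (innerc (T j) (T k)) <= B) ->
  \sum_j cabs (innerc (T j) F) ^+ 2 <= B.
Proof.
move=> F1 B0 rowB.
pose a j := cabs (innerc (T j) F); pose A := \sum_j a j ^+ 2.
have A0 : 0 <= A by apply: sumr_ge0 => j _; rewrite sqr_ge0.
pose u i := \sum_j conjc (innerc (T j) F) * T j i.
have uF : innerc u F = A%:C.
  rewrite innerc_suml rmorph_sum; apply: eq_bigr => j _.
  by rewrite mulrC mulcJ.
have Au : A ^+ 2 <= normsq u.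
  by have := cabs_innerc_unit_le u F1; rewrite uF cabs_real ger0_norm.
have uAB : normsq u <= A * B.
  apply: le_trans (normsq_comb_le _ _) _; rewrite /A mulr_suml.
  under eq_bigr do under eq_bigr do rewrite !cabsJ.
  apply: le_trans (@sum_gram_le _ _ a (fun j k => cabs (innerc (T j) (T k))) _ _) _.
  - by move=> j k; exact: cabs_ge0.
  - by move=> j k; rewrite innerc_conj cabsJ.
  by apply: ler_sum => j _; rewrite ler_wpM2l ?sqr_ge0.
change (A <= B); nra.
Qed.
End GramBessel.

Definition tensor (R : realType) (n : nat) (I : finType) (g : 'I_n -> I -> C R)
  : {ffun 'I_n -> I} -> C R :=
  fun j => \prod_i g i (j i).

Lemma innerc_tensor (R : realType) (n : nat) (I : finType) (g h : 'I_n -> I -> C R) :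
  innerc (tensor g) (tensor h) = \prod_i innerc (g i) (h i).
Proof.
rewrite /innerc bigA_distr_bigA; apply: eq_bigr => j _.
by rewrite /tensor rmorph_prod -big_split.
Qed.

Section RealInequalities.
Variable R : realType.

Lemma sqrtr_prod (I : finType) (F : I -> R) : (forall i, 0 <= F i) ->
  Num.sqrt (\prod_i F i) = \prod_i Num.sqrt (F i).
Proof.
move=> F0; elim/big_rec2: _ => [|i y1 y2 _ <-]; first by rewrite sqrtr1.
by rewrite sqrtrM.
Qed.

Lemma powR_prod (I : finType) (F : I -> R) (p : R) : (forall i, 0 <= F i) ->
  (\prod_i F i) `^ p = \prod_i F i `^ p.
Proof.
move=> F0; suff [] : 0 <= \prod_i F i /\ (\prod_i F i) `^ p = \prod_i F i `^ p by [].
elim/big_rec2: _ => [|i y1 y2 _ [y1_ge0 <-]]; first by rewrite powR1.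
by rewrite mulr_ge0 // powRM.
Qed.

(* Young's inequality with exponents 1/p and 1/(1-p), applied to y^p and 1. *)
Lemma powR_le_affine (y p : R) : 0 <= y -> 0 < p <= 1 -> y `^ p <= p * y + (1 - p).
Proof.
move=> y0 /andP[p0 p1]; have [->|p_neq1] := eqVneq p 1.
  by rewrite powRr1 // subrr addr0 mul1r.
have p_lt1 : p < 1 by rewrite lt_neqAle p_neq1.
have conj_exps : (p^-1)^-1 + ((1 - p)^-1)^-1 = 1 by rewrite !invrK addrC subrK.
have pV0 : 0 < p^-1 by rewrite invr_gt0.
have qV0 : 0 < (1 - p)^-1 by rewrite invr_gt0 subr_gt0.
have := conjugate_powR (powR_ge0 y p) ler01 pV0 qV0 conj_exps.
by rewrite mulr1 -powRrM mulfV ?gt_eqF // powRr1 // powR1 !invrK mul1r mulrC.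
Qed.

Lemma mulr_powR_div (N S p : R) : 0 < N -> 0 <= S ->
  N * (S / N) `^ p = N `^ (1 - p) * S `^ p.
Proof.
move=> N0 S0; rewrite powRM //; last by rewrite invr_ge0 ltW.
rewrite -powR_inv1 ?ltW // -powRrM.
rewrite mulN1r mulrCA -[X in X * N `^ _]powRr1 ?ltW // -powRD; last first.
  by rewrite (gt_eqF N0) implybT.
by rewrite mulrC.
Qed.

Lemma sum_powR_le (J : finType) (P : pred J) (b : J -> R) (p : R) :
  (forall j, 0 <= b j) -> 0 < p <= 1 ->
  \sum_(j | P j) b j `^ p <= #|P|%:R `^ (1 - p) * (\sum_(j | P j) b j) `^ p.
Proof.
move=> b0 p01; have /andP[p0 _] := p01.
set S := \sum_(j | P j) b j; set N : R := #|P|%:R.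
have S0 : 0 <= S by exact: sumr_ge0.
have [S_eq0|S_neq0] := eqVneq S 0.
  rewrite big1 ?mulr_ge0 ?powR_ge0 // => j Pj.
  by rewrite (psumr_eq0P (fun j _ => b0 j) S_eq0) // powR0 ?gt_eqF.
have N0 : 0 < N.
  rewrite ltr0n lt0n; apply: contra S_neq0 => /eqP/card0_eq P0.
  by rewrite /S big_pred0.
have s0 : 0 < S / N by rewrite divr_gt0 // lt_neqAle eq_sym S_neq0.
(* the tangent line of s |-> s^p at the mean S/N *)
have tangent j : b j `^ p <= (S / N) `^ p * (p * (b j / (S / N)) + (1 - p)).
  have bs0 : 0 <= b j / (S / N) := divr_ge0 (b0 j) (ltW s0).
  rewrite {1}(_ : b j = S / N * (b j / (S / N))); last by rewrite mulrC divfK ?lt0r_neq0.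
  by rewrite (powRM p (ltW s0) bs0) ler_wpM2l ?powR_ge0 ?powR_le_affine.
apply: le_trans (ler_sum _ (fun j _ => tangent j)) _.
rewrite -mulr_sumr big_split /= sumr_const -mulr_sumr -mulr_suml.
have -> : p * (S / (S / N)) + (1 - p) *+ #|P| = N.
  by rewrite -mulr_natr -/N; field; rewrite S_neq0 lt0r_neq0.
by rewrite mulrC mulr_powR_div.
Qed.
End RealInequalities.

Section Channel.
Variables (R : realType) (X Y : finType) (W : X -> Y -> R).

Lemma ip_psi_ge0 x x' : 0 <= ip_psi W x x'.
Proof. by apply: sumr_ge0 => y _; rewrite mulr_ge0 ?sqrtr_ge0. Qed.

Lemma ip_psi_le1 x x' : is_channel W -> ip_psi W x x' <= 1.
Proof.
move=> [W0 W1]; apply: (@le_trans _ _ (\sum_y (W x y + W x' y) / 2)).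
  apply: ler_sum => y _.
  have := sqr_sqrtr (W0 x y); have := sqr_sqrtr (W0 x' y).
  have := sqr_ge0 (Num.sqrt (W x y) - Num.sqrt (W x' y)).
  rewrite !expr2; nra.
by rewrite -mulr_suml big_split /= !W1; lra.
Qed.

Lemma ip_Psi_prod (n : nat) (xm xm' : 'I_n -> X) : (forall x y, 0 <= W x y) ->
  ip_Psi W xm xm' = \prod_i ip_psi W (xm i) (xm' i).
Proof.
move=> W0; rewrite /ip_Psi /ip_psi bigA_distr_bigA; apply: eq_bigr => y _.
rewrite -big_split /= sqrtr_prod => [|i]; last by rewrite mulr_ge0.
by apply: eq_bigr => i _; rewrite sqrtrM.
Qed.
End Channel.

(* The extra zero coordinate keeps the dimension positive, so that a uniform
   unit vector exists even for an empty output alphabet. *)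
Definition embed (R : realType) (Y : finType) (h : Y -> C R) : 'I_#|Y|.+1 -> C R :=
  fun j => if unlift ord0 j is Some k then h (enum_val k) else 0.

Lemma embed_lift (R : realType) (Y : finType) (h : Y -> C R) y :
  embed h (lift ord0 (enum_rank y)) = h y.
Proof. by rewrite /embed liftK enum_rankK. Qed.

Lemma cinner_embed (R : realType) (Y : finType) (h : Y -> C R) v :
  cinner (embed h) v = \sum_y h y * conjc (v (lift ord0 (enum_rank y))).
Proof.
rewrite /cinner big_ord_recl {1}/embed unlift_none mul0r add0r.
rewrite (reindex (@enum_rank Y)) /=; last exact: onW_bij (enum_rank_bij Y).
by apply: eq_bigr => y _; rewrite embed_lift.
Qed.

(* The states psi_x themselves, tested against the uniform unit vector. *)
Lemma rep_values_neq0 (R : realType) (X Y : finType) (W : X -> Y -> R) (rho : R) :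
  is_channel W -> 1 <= rho -> (rep_values W rho !=set0)%classic.
Proof.
move=> HW rho_ge1; have [W0 W1] := HW.
pose t x := embed (fun y => (Num.sqrt (W x y))%:C).
pose c : R := (Num.sqrt (#|Y|.+1%:R))^-1.
have c_gt0 : 0 < c by rewrite invr_gt0 sqrtr_gt0 ltr0n.
pose f : 'I_#|Y|.+1 -> C R := fun=> c%:C.
have tt x x' : cinner (t x) (t x') = (ip_psi W x x')%:C.
  rewrite cinner_embed /ip_psi rmorph_sum; apply: eq_bigr => y _.
  by rewrite /t embed_lift conjc_real -rmorphM.
have tf x : cinner (t x) f = ((\sum_y Num.sqrt (W x y)) * c)%:C.
  rewrite cinner_embed mulr_suml rmorph_sum; apply: eq_bigr => y _.
  by rewrite conjc_real -rmorphM.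
have sqrtW_gt0 x : 0 < \sum_y Num.sqrt (W x y).
  rewrite lt_neqAle sumr_ge0 ?andbT => [|y _]; last exact: sqrtr_ge0.
  apply/eqP => /esym sqrtW0; have := W1 x; rewrite big1 => [/eqP|y _].
    by rewrite eq_sym oner_eq0.
  apply/eqP; rewrite eq_le W0 andbT -sqrtr_eq0.
  by rewrite (psumr_eq0P (fun y _ => sqrtr_ge0 (W x y)) sqrtW0).
exists (\big[Num.max/0]_x ln ((cabs (cinner (t x) f) ^+ 2)^-1)), #|Y|.+1, t, f.
split=> //; first split=> [x|x x'].
- rewrite /unit_vec tt (_ : ip_psi W x x = 1) // /ip_psi -(W1 x).
  by apply: eq_bigr => y _; rewrite -expr2 sqr_sqrtr.
- rewrite tt cabs_real ger0_norm ?ip_psi_ge0 //.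
  have [->|psi_neq0] := eqVneq (ip_psi W x x') 0; first exact: powR_ge0.
  apply: ger1_powR; last by rewrite invf_le1 // (lt_le_trans ltr01).
  by rewrite lt_neqAle eq_sym psi_neq0 ip_psi_ge0 ip_psi_le1.
- rewrite /unit_vec /cinner; under eq_bigr do rewrite conjc_real -rmorphM.
  rewrite -rmorph_sum sumr_const card_ord -mulr_natl -expr2 exprVn.
  by rewrite sqr_sqrtr ?ler0n // mulfV // pnatr_eq0.
- by move=> x; rewrite tf cabs_real ger0_norm ?mulr_gt0 // ltW ?mulr_gt0.
Qed.

Section RepresentationBound.
Variables (R : realType) (X Y : finType) (W : X -> Y -> R).
Hypothesis HW : is_channel W.
Variables (n M : nat) (code : 'I_M -> 'I_n -> X) (rho : R).
Hypothesis rho_ge1 : 1 <= rho.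
Variables (d : nat) (t : X -> 'I_d -> C R) (f : 'I_d -> C R).
Hypotheses (t_rep : orth_rep W rho t) (f_unit : unit_vec f)
  (tf_gt0 : forall x, 0 < cabs (cinner (t x) f)).

Let S := \big[Num.max/0]_(m < M) \sum_(m' < M | m' != m) ip_Psi W (code m) (code m').
Let V := \big[Num.max/0]_x ln ((cabs (cinner (t x) f) ^+ 2)^-1).
Let T m := tensor (fun i => t (code m i)).
Let F := tensor (fun _ : 'I_n => f).

Let rho_gt0 : 0 < rho. Proof. exact: lt_le_trans ltr01 rho_ge1. Qed.
Let rhoV01 : 0 < rho^-1 <= 1. Proof. by rewrite invr_gt0 rho_gt0 invf_le1. Qed.

Lemma normsq_tensor_unit : normsq F = 1.
Proof. by apply: complexI; rewrite -innerc_self innerc_tensor big1. Qed.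

Lemma tensor_overlap_ge m : expR (- (n%:R * V)) <= cabs (innerc (T m) F) ^+ 2.
Proof.
have overlap_ge x : expR (- V) <= cabs (cinner (t x) f) ^+ 2.
  have tf2_gt0 : 0 < cabs (cinner (t x) f) ^+ 2 by rewrite exprn_gt0.
  rewrite -[leRHS]invrK expRN lef_pV2 ?posrE ?expR_gt0 ?invr_gt0 //.
  by rewrite -[leLHS]lnK ?posrE ?invr_gt0 // ler_expR (le_bigmax 0 (fun x => _) x).
rewrite innerc_tensor cabs_prod -prodrXl -mulrN expRM_natl.
rewrite -[n in _ ^+ n]card_ord -prodr_const.
by apply: ler_prod => i _; rewrite expR_ge0 overlap_ge.
Qed.

Lemma tensor_gram_row_le m :
  \sum_m' cabs (innerc (T m) (T m'))
  <= 1 + (M%:R - 1) `^ (1 - rho^-1) * S `^ rho^-1.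
Proof.
have [t_unit t_bound] := t_rep; have [W0 _] := HW.
have Psi_ge0 m' : 0 <= ip_Psi W (code m) (code m').
  by rewrite ip_Psi_prod // prodr_ge0 // => i _; exact: ip_psi_ge0.
rewrite (bigD1 m) //=; apply: lerD.
  by rewrite innerc_tensor cabs_prod big1 // => i _; rewrite [innerc _ _]t_unit cabs1.
apply: le_trans (_ : \sum_(m' | m' != m) ip_Psi W (code m) (code m') `^ rho^-1 <= _).
  apply: ler_sum => m' _; rewrite innerc_tensor cabs_prod ip_Psi_prod //.
  rewrite powR_prod => [|i]; last exact: ip_psi_ge0.
  by apply: ler_prod => i _; rewrite cabs_ge0 t_bound.
apply: le_trans (sum_powR_le _ Psi_ge0 rhoV01) _.
rewrite cardC1 card_ord -subn1 natrB ?(leq_ltn_trans _ (ltn_ord m)) //.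
rewrite ler_wpM2l ?powR_ge0 //; apply: ge0_ler_powR.
- by rewrite invr_ge0 ltW.
- by rewrite nnegrE sumr_ge0.
- by rewrite nnegrE bigmax_ge_id.
exact: (le_bigmax 0 (fun m => \sum_(m' < M | m' != m) ip_Psi W (code m) (code m')) m).
Qed.

Lemma rep_value_bound :
  M%:R * expR (- (n%:R * V)) <= 1 + (M%:R - 1) `^ (1 - rho^-1) * S `^ rho^-1.
Proof.
apply: le_trans (sum_cabs_innerc_le normsq_tensor_unit _ tensor_gram_row_le).
  rewrite mulr_natl -[M in _ *+ M]card_ord -sumr_const.
  by apply: ler_sum => m _; exact: tensor_overlap_ge.
by rewrite addr_ge0 ?mulr_ge0 ?powR_ge0.
Qed.
End RepresentationBound.

Lemma expR_inf_le (R : realType) (E : set R) (a k c : R) :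
  (E !=set0)%classic -> 0 < a -> 0 <= k ->
  (forall v, E v -> a * expR (- (k * v)) <= c) ->
  a * expR (- (k * inf E)) <= c.
Proof.
move=> [v0 Ev0] a_gt0 k_ge0 boundE.
have [k0|k_neq0] := eqVneq k 0; first by have := boundE v0 Ev0; rewrite k0 !mul0r.
have k_gt0 : 0 < k by rewrite lt_neqAle eq_sym k_neq0.
have ca_gt0 : 0 < c / a.
  by rewrite divr_gt0 // (lt_le_trans _ (boundE v0 Ev0)) ?mulr_gt0 ?expR_gt0.
have lnE v : E v -> - (k * v) <= ln (c / a).
  by move=> /boundE Ev; rewrite -ler_expR lnK ?posrE // ler_pdivlMr // mulrC.
have inf_ge : - ln (c / a) / k <= inf E.
  apply: lb_le_inf; first by exists v0.
  by move=> v /lnE; rewrite ler_pdivrMr // mulrC; lra.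
rewrite mulrC -ler_pdivlMr // -[leRHS]lnK ?posrE // ler_expR.
by move: inf_ge; rewrite ler_pdivrMr // mulrC; lra.
Qed.

Lemma powR_interpolate (R : realType) (a s r : R) : 0 <= a -> 0 <= s -> 0 < r ->
  (a `^ (1 - r^-1) * s `^ r^-1) `^ r = a `^ (r - 1) * s.
Proof.
move=> a0 s0 r0; rewrite powRM ?powR_ge0 // -!powRrM mulrBl mul1r.
by rewrite mulVf ?gt_eqF // powRr1.
Qed.

Local Close Scope complex_scope.

Theorem theorem1 (R : realType) (X Y : finType) (W : X -> Y -> R)
  (HW : is_channel W) (n M : nat) (hM : (2 <= M)%N)
  (code : 'I_M -> 'I_n -> X) (rho : R) (hrho : 1 <= rho) :
  \big[Num.max/0]_(m < M) (\sum_(m' < M | m' != m) ip_Psi W (code m) (code m'))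
  >= (Num.max 0 (M%:R * expR (- (n%:R * vartheta W rho)) - 1)) `^ rho
     / (M%:R - 1) `^ (rho - 1).
Proof.
set S := \big[Num.max/0]_(m < M) _.
set K := (M%:R - 1) `^ (1 - rho^-1) * S `^ rho^-1.
have rho_gt0 : 0 < rho := lt_le_trans ltr01 hrho.
have M1_gt0 : 0 < M%:R - 1 :> R by rewrite subr_gt0 ltr1n.
have S_ge0 : 0 <= S by exact: bigmax_ge_id.
have bound : M%:R * expR (- (n%:R * vartheta W rho)) - 1 <= K.
  rewrite lerBlDl; apply: expR_inf_le; rewrite ?ltr0n ?ler0n ?(leq_trans _ hM) //.
  - exact: rep_values_neq0.
  - by move=> _ [d [t [f [t_rep f_unit tf_gt0 ->]]]]; exact: rep_value_bound.
rewrite ler_pdivrMr ?powR_gt0 // [leRHS]mulrC.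
rewrite -(powR_interpolate (ltW M1_gt0) S_ge0 rho_gt0).
apply: ge0_ler_powR; first exact: ltW.
- by rewrite nnegrE le_max lexx.
- by rewrite nnegrE mulr_ge0 ?powR_ge0.
by rewrite ge_max bound mulr_ge0 ?powR_ge0.
Qed.
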